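(* Let $\Gamma\subseteq\mathbf{\Phi}^{\mathbb{R}}_D$ be a weighted relational clone. Then $\mathrm{supp}(\mathrm{wPol}_{\mathbb{R}}(\Gamma))=\mathrm{Pol}(\Gamma)$.
   Context: $D$ is a fixed finite set with $|D|\ge2$; $\overline{\mathbb{R}}=\mathbb{R}\cup\{\infty\}$. An $m$-ary weighted relation is $\gamma:D^m\to\overline{\mathbb{R}}$; $\mathbf{\Phi}^{\mathbb{R}}_D$ is the set of all of them; $\mathrm{Feas}(\gamma)=\{\mathbf{x}:\gamma(\mathbf{x})<\infty\}$; $\mathrm{Opt}(\gamma)$ is the relation that is $0$ on $\{\mathbf{x}\in\mathrm{Feas}(\gamma):\gamma(\mathbf{x})\le\gamma(\mathbf{y})\ \forall\mathbf{y}\}$ and $\infty$ elsewhere. Topology: for each $m$ and $F\subseteq D^m$, the $m$-ary $\gamma$ with $\mathrm{Feas}(\gamma)=F$ are identified with $\mathbb{R}^F$ (Euclidean topology), and $\mathbf{\Phi}^{\mathbb{R}}_D$ has the disjoint union topology. $\phi_=$: binary equality ($0$ if $x=y$, else $\infty$); $\phi_\emptyset$: unary, $\infty$ everywhere. Addition: $\gamma(x_1,\dots,x_r)=\gamma_1(y_1,\dots,y_s)+\gamma_2(z_1,\dots,z_t)$ for a fixed choice of $y_i,z_j$ among the $x$'s; minimisation: $\gamma(x_1,\dots,x_r)=\min_{\mathbf{y}\in D^s}\gamma'(x_1,\dots,x_r,\mathbf{y})$. A weighted relational clone is a set $\Gamma\subseteq\mathbf{\Phi}^{\mathbb{R}}_D$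 containing $\phi_=,\phi_\emptyset$, closed under addition, minimisation, scaling by non-negative reals ($0\cdot\infty=\infty$), addition of real constants and $\mathrm{Opt}$, and topologically closed. A $k$-ary operation is $f:D^k\to D$, applied coordinatewise; $\mathbf{O}^{(k)}_D$ the set of them. $f$ is a polymorphism of $\gamma$ if $f(\mathbf{x}_1,\dots,\mathbf{x}_k)\in\mathrm{Feas}(\gamma)$ whenever all $\mathbf{x}_i\in\mathrm{Feas}(\gamma)$; $\mathrm{Pol}(\Gamma)$ is the set of common polymorphisms. $\mathbf{J}_D$ is the set of projections $e^{(k)}_i(x_1,\dots,x_k)=x_i$. A $k$-ary weighting is $\omega:\mathbf{O}^{(k)}_D\to\mathbb{R}$ with $\sum_f\omega(f)=0$ and $\omega(f)<0$ only if $f$ is a projection; $\mathrm{supp}(\omega)=\mathbf{J}_D^{(k)}\cup\{f:\omega(f)>0\}$; for a set $\Omega$ of weightings, $\mathrm{supp}(\Omega)=\mathbf{J}_D\cup\bigcup_{\omega\in\Omega}\mathrm{supp}(\omega)$. $\omega$ is a weighted polymorphism of $\gamma$ if $\mathrm{supp}(\omega)\subseteq\mathrm{Pol}(\gamma)$ and for all $\mathbf{x}_1,\dots,\mathbf{x}_k\in\mathrm{Feas}(\gamma)$, $\sum_{f\in\mathrm{supp}(\omega)}\omega(f)\gamma(f(\mathbf{x}_1,\dots,\mathbf{x}_k))\le0$; $\mathrm{wPol}_{\mathbb{R}}(\Gamma)$ is the set of weightings that are weighted polymorphisms of all $\gamma\in\Gamma$. *)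

From mathcomp Require Import all_boot all_order all_algebra.
From Stdlib Require Import Reals.
From mathcomp Require Import Rstruct.
Set Implicit Arguments. Unset Strict Implicit. Unset Printing Implicit Defensive.
Import Order.TTheory GRing.Theory Num.Theory.
Local Open Scope ring_scope.

Section WRC.
Variable D : finType.

(* extended reals  R ∪ {∞}: [Some r] is the real r, [None] is ∞ *)
Definition xR := option R.

Definition tup (m : nat) := {ffun 'I_m -> D}.

Definition wrel_m (m : nat) := tup m -> xR.
Definition wrel := {m : nat & wrel_m m}.
Definition mkw (m : nat) (g : wrel_m m) : wrel := existT _ m g.

Definition feas (m : nat) (g : wrel_m m) (x : tup m) : bool := g x != None.

Definition xadd (a b : xR) : xR :=
  match a, b with Some r, Some s => Some (r + s) | _, _ => None end.
Definition xmin (a b : xR) : xR :=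
  match a, b with
  | Some r, Some s => Some (Num.min r s)
  | None, _ => b
  | _, None => a
  end.
Definition xle (a b : xR) : bool :=
  match a, b with
  | Some r, Some s => r <= s
  | _, None => true
  | None, Some _ => false
  end.

Definition phi_eq : wrel :=
  @mkw 2 (fun x => if x ord0 == x (@Ordinal 2 1 isT) then Some 0 else None).
Definition phi_empty : wrel := @mkw 1 (fun _ => None).

Definition wadd (r s t : nat) (g1 : wrel_m s) (g2 : wrel_m t)
  (sig : 'I_s -> 'I_r) (tau : 'I_t -> 'I_r) : wrel_m r :=
  fun x => xadd (g1 [ffun i => x (sig i)]) (g2 [ffun j => x (tau j)]).

Definition tcat (r s : nat) (x : tup r) (y : tup s) : tup (r + s) :=
  [ffun i : 'I_(r + s) => match fintype.split i with inl j => x j | inr k => y k end].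

Definition wmin (r s : nat) (g : wrel_m (r + s)) : wrel_m r :=
  fun x => \big[xmin/None]_(y : tup s) g (tcat x y).

(* scaling by c >= 0, with 0 * ∞ = ∞ *)
Definition wscale (m : nat) (c : R) (g : wrel_m m) : wrel_m m :=
  fun x => omap (fun v => c * v) (g x).
Definition wconst (m : nat) (c : R) (g : wrel_m m) : wrel_m m :=
  fun x => omap (fun v => v + c) (g x).
Definition wopt (m : nat) (g : wrel_m m) : wrel_m m :=
  fun x => if feas g x && [forall y, xle (g x) (g y)] then Some 0 else None.

(* topological closedness: each set of weighted relations of arity m with
   feasibility set F is identified with R^F (Euclidean topology) and the
   whole space carries the disjoint union topology; so closedness means
   sequential closedness within each component, i.e. closedness under
   coordinatewise limits of sequences with a common feasibility set. *)
Definition top_closed (Gam : wrel -> Prop) : Prop :=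
  forall (m : nat) (gs : nat -> wrel_m m) (g : wrel_m m),
    (forall n, Gam (mkw (gs n))) ->
    (forall n x, feas (gs n) x = feas g x) ->
    (forall x, feas g x ->
       Un_cv (fun n => odflt 0 (gs n x)) (odflt 0 (g x))) ->
    Gam (mkw g).

Definition weighted_relational_clone (Gam : wrel -> Prop) : Prop :=
  [/\ Gam phi_eq, Gam phi_empty,
      (forall (r s t : nat) (g1 : wrel_m s) (g2 : wrel_m t)
              (sig : 'I_s -> 'I_r) (tau : 'I_t -> 'I_r),
          Gam (mkw g1) -> Gam (mkw g2) -> Gam (mkw (wadd g1 g2 sig tau))),
      (forall (r s : nat) (g : wrel_m (r + s)), Gam (mkw g) -> Gam (mkw (wmin g)))
    & [/\ (forall (m : nat) (c : R) (g : wrel_m m), 0 <= c ->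
             Gam (mkw g) -> Gam (mkw (wscale c g))),
          (forall (m : nat) (c : R) (g : wrel_m m),
             Gam (mkw g) -> Gam (mkw (wconst c g))),
          (forall (m : nat) (g : wrel_m m), Gam (mkw g) -> Gam (mkw (wopt g)))
        & top_closed Gam]].

Definition op (k : nat) := {ffun tup k -> D}.
Definition anyop := {k : nat & op k}.

Definition is_proj (k : nat) (f : op k) : bool :=
  [exists i : 'I_k, f == [ffun x : tup k => x i]].

Definition opapp (k m : nat) (f : op k) (xs : 'I_k -> tup m) : tup m :=
  [ffun j => f [ffun i => xs i j]].

Definition is_pol (k m : nat) (f : op k) (g : wrel_m m) : Prop :=
  forall xs : 'I_k -> tup m, (forall i, feas g (xs i)) -> feas g (opapp f xs).

Definition Pol (Gam : wrel -> Prop) (kf : anyop) : Prop :=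
  forall w : wrel, Gam w -> is_pol (projT2 kf) (projT2 w).

Definition weightfun (k : nat) := op k -> R.
Definition is_weighting (k : nat) (om : weightfun k) : Prop :=
  \sum_(f : op k) om f = 0 /\ (forall f : op k, om f < 0 -> is_proj f).
Definition anyweight := {k : nat & weightfun k}.

Definition in_supp (k : nat) (om : weightfun k) (f : op k) : bool :=
  is_proj f || (0 < om f).

Definition is_wpol (k m : nat) (om : weightfun k) (g : wrel_m m) : Prop :=
  (forall f : op k, in_supp om f -> is_pol f g) /\
  forall xs : 'I_k -> tup m, (forall i, feas g (xs i)) ->
    \sum_(f : op k | in_supp om f) om f * odflt 0 (g (opapp f xs)) <= 0.

Definition wPol (Gam : wrel -> Prop) (kw : anyweight) : Prop :=
  is_weighting (projT2 kw) /\
  forall w : wrel, Gam w -> is_wpol (projT2 kw) (projT2 w).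

Definition supp_set (Om : anyweight -> Prop) (kf : anyop) : Prop :=
  is_proj (projT2 kf) \/
  exists om : weightfun (projT1 kf),
    Om (existT _ (projT1 kf) om) /\ in_supp om (projT2 kf).

End WRC.

(* Projections, and the operations in the support of a weighted polymorphism, are
   polymorphisms; this is one inclusion. For the converse, fix a k-ary polymorphism f
   that is not a projection and identify each k-ary operation g with its table, the
   tuple of its values on the points of D^k. Evaluating the relations of Gamma at the
   tables of the polymorphisms gives a set C of vectors indexed by Pol^(k); it is a
   closed convex cone because Gamma is closed under addition, non-negative scaling and
   limits. Applying Opt to a relation whose vector is non-negative and vanishes on the
   projections shows that C meets the non-negative orthant of the non-projections only
   in 0. A separating hyperplane for this pointed pair of closed cones, obtained from a
   nearest-point argument, is a functional w that is non-positive on C, non-negative on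
   the non-projections and positive at f. Since C contains the vectors that are constantly
   1 or -1 on Pol^(k), the values of w sum to 0, so w is a weighting; it is a weighted polymorphism of
   Gamma, and f lies in its support. *)

From mathcomp Require Import all_boot all_order all_algebra.
From Stdlib Require Import Reals.
From mathcomp Require Import Rstruct.
From mathcomp Require Import all_classical all_reals all_analysis.
From mathcomp Require Import lra ring.
Set Implicit Arguments. Unset Strict Implicit. Unset Printing Implicit Defensive.
Import Order.TTheory GRing.Theory Num.Theory.
Import numFieldNormedType.Exports.
Local Open Scope ring_scope.
Local Open Scope classical_set_scope.

Lemma increasing_seq_ge (f : nat -> nat) : increasing_seq f -> forall n, (n <= f n)%nat.
Proof.
move=> /increasing_seqP finc.
by elim=> // n IH; apply: leq_ltn_trans IH _; exact: finc.
Qed.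

Lemma increasing_seq_cvgy (f : nat -> nat) : increasing_seq f -> f n @[n --> \oo] --> \oo.
Proof.
move=> finc; apply/cvgnyPge => A; near=> n.
apply: leq_trans (increasing_seq_ge finc n).
by near: n; exact: nbhs_infty_ge.
Unshelve. all: by end_near. Qed.

Section Sequences.
Context {R : realType} {I : finType}.

Lemma cvg_subseq (f : nat -> nat) (u : nat -> R) (l : R) :
  increasing_seq f -> u n @[n --> \oo] --> l -> u (f n) @[n --> \oo] --> l.
Proof. by move=> /increasing_seq_cvgy fy ul; exact: cvg_comp fy ul. Qed.

Lemma bounded_seq_cvg_subseq (x : nat -> I -> R) (B : R) :
  (forall n i, `|x n i| <= B) ->
  exists2 f : nat -> nat, increasing_seq f &
    exists L : I -> R, forall i, x (f n) i @[n --> \oo] --> L i.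
Proof.
move=> xB.
suff [f finc [L xL]] : exists2 f : nat -> nat, increasing_seq f &
    exists L : I -> R, forall i, i \in enum I -> x (f n) i @[n --> \oo] --> L i.
  by exists f => //; exists L => i; apply: xL; rewrite mem_enum.
elim: (enum I) => [|i s [f finc [L xL]]].
  by exists (fun n => n) => //; exists (fun=> 0).
have xfB : bounded_fun (fun n => x (f n) i).
  exists B; split => [|y By n _ /=]; first exact: num_real.
  exact: le_trans (xB _ _) (ltW By).
have [h hinc /cvg_ex[l xl]] := bolzano_weierstrass xfB.
exists (f \o h).
  by move=> m n /=; rewrite finc; exact: hinc.
exists (fun j => if j == i then l else L j) => j; rewrite in_cons.
case: eqP => [-> _ //|_ /= js].
exact: cvg_subseq hinc (xL j js).
Qed.

Lemma cvg_harmonic_bound (a : nat -> R) (c : R) :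
  (forall n, `|a n| <= c * harmonic n) -> a n @[n --> \oo] --> 0.
Proof.
move=> ac; have kh (k : R) : k * harmonic n @[n --> \oo] --> 0.
  by rewrite -(mulr0 k); apply: cvgM => //; [exact: cvg_cst | exact: cvg_harmonic].
apply: (squeeze_cvgr (f := fun n => - c * harmonic n)
  (h := fun n => c * harmonic n)) (kh _) (kh _).
by near=> n; rewrite mulNr -ler_norml.
Unshelve. all: by end_near. Qed.

End Sequences.

Section Cones.
Context {R : realType} {I : finType}.
Implicit Types (p q u v w : I -> R) (K C N : set (I -> R)).

Definition dotf u v := \sum_i u i * v i.
Definition sqnorm u := dotf u u.
Definition norm1 u := \sum_i `|u i|.

Lemma norm1_ge u i : `|u i| <= norm1 u.
Proof. by rewrite /norm1 (bigD1 i) //= lerDl; exact: sumr_ge0. Qed.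

Lemma sqnorm_ge0 u : 0 <= sqnorm u.
Proof. by apply: sumr_ge0 => i _; rewrite -expr2 sqr_ge0. Qed.

Lemma sqr_le_sqnorm u i : u i * u i <= sqnorm u.
Proof.
rewrite /sqnorm /dotf (bigD1 i) //= lerDl.
by apply: sumr_ge0 => j _; rewrite -expr2 sqr_ge0.
Qed.

Lemma sqnorm_gt0 u i : u i != 0 -> 0 < sqnorm u.
Proof.
move=> ui0; apply: lt_le_trans (sqr_le_sqnorm u i).
by rewrite -expr2 exprn_even_gt0.
Qed.

Lemma sqnorm_subZ u v t :
  sqnorm (fun i => u i - t * v i) = sqnorm u - 2 * t * dotf u v + t ^+ 2 * sqnorm v.
Proof.
rewrite /sqnorm /dotf !mulr_sumr -sumrB -big_split /=.
by apply: eq_bigr => i _; ring.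
Qed.

Lemma cvg_sum_fun (x : nat -> I -> R) (L : I -> R) :
  (forall i, x n i @[n --> \oo] --> L i) ->
  \sum_i x n i @[n --> \oo] --> \sum_i L i.
Proof. by move=> xL; apply: cvg_big => [|i _]; [exact: add_continuous|exact: xL]. Qed.

Lemma cvg_sqnorm (x : nat -> I -> R) (L : I -> R) :
  (forall i, x n i @[n --> \oo] --> L i) -> sqnorm (x n) @[n --> \oo] --> sqnorm L.
Proof. by move=> xL; apply: cvg_sum_fun => i; apply: cvgM. Qed.

Lemma cvg_fun_bounded (x : nat -> I -> R) (L : I -> R) :
  (forall i, x n i @[n --> \oo] --> L i) -> exists B, forall n i, `|x n i| <= B.
Proof.
move=> xL.
have xiB i : exists B, forall n, `|x n i| <= B.
  have xi : cvgn (fun n => x n i) by apply/cvg_ex; exists (L i).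
  have [M [_ MB]] := cvg_seq_bounded xi.
  by exists (M + 1) => n; apply: (MB (M + 1)); rewrite ?ltrDl.
have [B xB] := choice xiB.
exists (norm1 B) => n i.
exact: le_trans (xB i n) (le_trans (ler_norm _) (norm1_ge B i)).
Qed.

Lemma norm1_lim (x : nat -> I -> R) (L : I -> R) (c : R) :
  (forall i, x n i @[n --> \oo] --> L i) -> (forall n, norm1 (x n) = c) -> norm1 L = c.
Proof.
move=> xL xc.
have xnL : norm1 (x n) @[n --> \oo] --> norm1 L.
  exact: cvg_sum_fun (fun i => cvg_norm (xL i)).
have xn_cst : (fun n => norm1 (x n)) = fun=> c by apply/funext.
by rewrite xn_cst in xnL; rewrite -(cvg_lim _ xnL) // lim_cst.
Qed.

Definition seq_closed K := forall (x : nat -> I -> R) L,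
  (forall n, K (x n)) -> (forall i, x n i @[n --> \oo] --> L i) -> K L.

Lemma nearest_point_exists K p v0 : K v0 -> seq_closed K ->
  exists2 q, K q & forall v, K v -> sqnorm (p \- q) <= sqnorm (p \- v).
Proof.
move=> Kv0 Kcl.
pose E := [set sqnorm (p \- v) | v in K].
have Einf : has_inf E.
  split; first by exists (sqnorm (p \- v0)), v0.
  by exists 0 => _ [v _ <-]; exact: sqnorm_ge0.
pose d := inf E.
have near_inf n : exists v, K v /\ sqnorm (p \- v) < d + n.+1%:R^-1.
  by have [_ [v Kv <-] lt] := inf_adherent (harmonic_gt0 n) Einf; exists v.
have [x /all_and2[xK xd]] := choice near_inf.
have xB n i : `|x n i| <= norm1 p + d + 2.
  have pi_le := norm1_ge p i.
  have sq := sqr_le_sqnorm (p \- x n) i.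
  have lt1 : sqnorm (p \- x n) < d + 1.
    by apply: lt_le_trans (xd n) _; rewrite lerD2l invf_le1 ?ler1n ?ltr0n.
  have := ler_normB (p i) (p i - x n i); rewrite opprB addrC subrK.
  have := real_normK (num_real (p i - x n i)).
  have := normr_ge0 (p i - x n i); rewrite /= in sq; nra.
have [f finc [q xq]] := bounded_seq_cvg_subseq xB.
have Kq : K q by apply: (Kcl (fun n => x (f n))) => // n; exact: xK.
suff dq : sqnorm (p \- q) <= d.
  by exists q => // v Kv; apply: le_trans dq (ge_inf Einf.2 _); exists v.
have pxq : forall i, (p \- x (f n)) i @[n --> \oo] --> (p \- q) i.
  by move=> i; apply: cvgB => //; exact: cvg_cst.
have dn : d + (f n).+1%:R^-1 @[n --> \oo] --> d.
  rewrite -[X in _ --> X]addr0; apply: cvgD; first exact: cvg_cst.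
  exact: cvg_subseq finc cvg_harmonic.
apply: ler_cvg_to (cvg_sqnorm pxq) dn _.
by near=> n; apply: ltW; exact: xd.
Unshelve. all: by end_near. Qed.

Definition convex_cone K := [/\ K (fun=> 0),
  (forall u v, K u -> K v -> K (u \+ v)) &
  (forall c u, 0 <= c -> K u -> K (fun i => c * u i))].

Lemma nonpos_of_quadratic_bound (a b : R) : 0 <= b ->
  (forall t, 0 < t <= 1 -> 2 * t * a <= t ^+ 2 * b) -> a <= 0.
Proof.
move=> b0 quad; rewrite leNgt; apply/negP => a0.
have ab0 : 0 < a + b by lra.
pose t := a / (a + b).
have tab : t * (a + b) = a by rewrite /t divfK ?gt_eqF.
have t0 : 0 < t by rewrite divr_gt0.
have t1 : t <= 1 by rewrite ler_pdivrMr // mul1r; lra.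
have := quad t; rewrite t0 t1 => /(_ isT); nra.
Qed.

Lemma cone_separation K p : convex_cone K -> seq_closed K -> ~ K p ->
  exists w, (forall v, K v -> dotf w v <= 0) /\ 0 < dotf w p.
Proof.
move=> [K0 KD KZ] Kcl Kp.
have [q Kq qmin] := nearest_point_exists p K0 Kcl.
pose w := p \- q.
have wmin v t : K (fun i => q i + t * v i) ->
    2 * t * dotf w v <= t ^+ 2 * sqnorm v.
  move=> Kqv; have := qmin _ Kqv.
  have -> : p \- (fun i => q i + t * v i) = fun i => w i - t * v i.
    by apply/funext => i; rewrite /w /=; ring.
  rewrite sqnorm_subZ; lra.
have wK v : K v -> dotf w v <= 0.
  move=> Kv; apply: nonpos_of_quadratic_bound (sqnorm_ge0 v) _ => t /andP[t0 _].
  by apply: wmin; apply: KD => //; apply: KZ => //; exact: ltW.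
have wq : 0 <= dotf w q.
  rewrite -oppr_le0; apply: nonpos_of_quadratic_bound (sqnorm_ge0 q) _ => t t01.
  have Kq' : K (fun i => q i + - t * q i).
    have -> : (fun i => q i + - t * q i) = fun i => (1 - t) * q i.
      by apply/funext => i; ring.
    by apply: KZ => //; lra.
  by have := wmin _ _ Kq'; rewrite sqrrN; lra.
have [i wi0] : exists i, w i != 0.
  apply/not_existsP => w0; apply: Kp; suff -> : p = q by [].
  by apply/funext => i; apply/eqP; rewrite -subr_eq0; apply/negPn/negP; exact: w0.
exists w; split => //.
have -> : dotf w p = sqnorm w + dotf w q.
  by rewrite /sqnorm /dotf -big_split; apply: eq_bigr => j _; rewrite /w /=; ring.
by have := sqnorm_gt0 wi0; lra.
Qed.

Definition cone_sub C N := [set w | exists2 u, C u & N (u \- w)].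

Section PointedPair.
Variables C N : set (I -> R).
Hypotheses (Ccone : convex_cone C) (Ncone : convex_cone N).
Hypotheses (Ccl : seq_closed C) (Ncl : seq_closed N).
Hypothesis pointed : forall v, C v -> N v -> forall i, v i = 0.

Lemma cone_sub_convex : convex_cone (cone_sub C N).
Proof.
case: Ccone Ncone => [C0 CD CZ] [N0 ND NZ]; split.
- by exists (fun=> 0) => //; rewrite (_ : _ \- _ = fun=> 0) // funeqE => i /=; rewrite subrr.
- move=> w1 w2 [u1 Cu1 Nuw1] [u2 Cu2 Nuw2]; exists (u1 \+ u2); first exact: CD.
  rewrite (_ : _ \- _ = (u1 \- w1) \+ (u2 \- w2)); first exact: ND.
  by apply/funext => i /=; ring.
- move=> c w c0 [u Cu Nuw]; exists (fun i => c * u i); first exact: CZ.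
  rewrite (_ : _ \- _ = fun i => c * (u \- w) i); first exact: NZ.
  by apply/funext => i /=; ring.
Qed.

Lemma cone_sub_bounded (u w : nat -> I -> R) (B : R) :
  (forall n, C (u n)) -> (forall n, N (u n \- w n)) -> (forall n i, `|w n i| <= B) ->
  exists B', forall n i, `|u n i| <= B'.
Proof.
(* Otherwise the normalisations of the [u n] accumulate at a vector of norm 1
   lying in both C and N. *)
move=> Cu Nuw wB; apply: contrapT => unbounded.
have big j : exists n, j.+1%:R < norm1 (u n).
  apply/not_existsP => small; apply: unbounded; exists j.+1%:R => n i.
  by apply: le_trans (norm1_ge _ i) _; rewrite leNgt; apply/negP; exact: small.
have [m mbig] := choice big.
have M0 j : 0 < norm1 (u (m j)) by apply: lt_trans (mbig j); rewrite ltr0n.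
pose s j := (norm1 (u (m j)))^-1.
have s0 j : 0 <= s j by rewrite invr_ge0 ltW.
pose z j i := s j * u (m j) i.
have zB j i : `|z j i| <= 1.
  by rewrite normrM ger0_norm // ler_pdivrMl // mulr1 norm1_ge.
have [h hinc [Z zZ]] := bounded_seq_cvg_subseq zB.
have CZ : C Z.
  by apply: (Ccl _ zZ) => j; case: Ccone => _ _ CZ; apply: CZ.
have NZ : N Z.
  apply: (Ncl (x := fun j i => s (h j) * (u (m (h j)) \- w (m (h j))) i)) => [j|i].
    by case: Ncone => _ _ NZ; apply: NZ.
  rewrite -[Z i]subr0; under eq_cvg do rewrite /= mulrBr.
  apply: cvgB; first exact: zZ.
  apply: (@cvg_harmonic_bound _ _ B) => j; rewrite normrM ger0_norm // mulrC.
  apply: ler_pM => //; rewrite /s /= lef_pV2 ?posrE ?ltr0n //.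
  apply/ltW/(le_lt_trans _ (mbig (h j))).
  by rewrite ler_nat ltnS; exact: increasing_seq_ge.
have norm1z j : norm1 (z j) = 1.
  rewrite /norm1 /z; under eq_bigr => i _ do rewrite normrM ger0_norm //.
  by rewrite -mulr_sumr mulVf ?gt_eqF.
have norm1Z : norm1 Z = 1 := norm1_lim zZ (fun j => norm1z (h j)).
have norm1Z0 : norm1 Z = 0.
  by rewrite /norm1 big1 // => i _; rewrite (pointed CZ NZ) normr0.
by move/eqP: (oner_neq0 R); rewrite -norm1Z norm1Z0.
Qed.

Lemma cone_sub_seq_closed : seq_closed (cone_sub C N).
Proof.
move=> x L Kx xL.
have Kx' n : exists u, C u /\ N (u \- x n) by have [u Cu Nux] := Kx n; exists u.
have [u /all_and2[Cu Nux]] := choice Kx'.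
have [B xB] := cvg_fun_bounded xL.
have [B' uB'] := cone_sub_bounded Cu Nux xB.
have [f finc [U uU]] := bounded_seq_cvg_subseq uB'.
exists U; first by apply: (Ccl _ uU) => n; exact: Cu.
apply: (Ncl (x := fun n => u (f n) \- x (f n))) => [n|i]; first exact: Nux.
by apply: cvgB; [exact: uU | exact: cvg_subseq finc (xL i)].
Qed.

End PointedPair.

Definition orthant (Q : set I) :=
  [set v : I -> R | (forall i, Q i -> 0 <= v i) /\ (forall i, ~ Q i -> v i = 0)].

Lemma orthant_convex Q : convex_cone (orthant Q).
Proof.
split; first by split=> // i _.
- move=> u v [u0 u0'] [v0 v0']; split=> i Qi /=; first by rewrite addr_ge0 ?u0 ?v0.
  by rewrite u0' ?v0' ?addr0.
- move=> c u c0 [u0 u0']; split=> i Qi; first by rewrite mulr_ge0 ?u0.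
  by rewrite u0' ?mulr0.
Qed.

Lemma orthant_seq_closed Q : seq_closed (orthant Q).
Proof.
move=> x L Qx xL; split=> i Qi.
  apply: (ler_cvg_to (cvg_cst (0 : R)) (xL i)).
  by apply: nearW => n; exact: (Qx n).1.
rewrite -(cvg_lim _ (xL i)) //; under eq_fun do rewrite (Qx _).2 //.
exact: lim_cst.
Qed.

Lemma pointed_cone_separation C (Q : set I) f0 :
  convex_cone C -> seq_closed C -> (forall v, C v -> orthant Q v -> forall i, v i = 0) ->
  Q f0 ->
  exists w, [/\ forall v, C v -> dotf w v <= 0, forall i, Q i -> 0 <= w i & 0 < w f0].
Proof.
move=> Ccone Ccl pointed Qf0.
pose e i : I -> R := fun j => (j == i)%:R.
have dotf_e w i : dotf w (e i) = w i.
  rewrite /dotf (bigD1 i) //= /e eqxx mulr1 big1 ?addr0 // => j /negbTE ->.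
  by rewrite mulr0.
have e_orthant i : Q i -> orthant Q (e i).
  move=> Qi; split=> j Qj; first by rewrite ler0n.
  by rewrite /e; case: eqP => // ji; rewrite ji in Qj.
have Kcl := cone_sub_seq_closed Ccone (orthant_convex Q) Ccl (@orthant_seq_closed Q) pointed.
have Ke : ~ cone_sub C (orthant Q) (e f0).
  move=> [u Cu [ueQ ueQ']].
  have uQ : orthant Q u.
    split=> i Qi; last first.
      have := ueQ' i Qi; rewrite /= /e; case: eqP => [if0|_]; last by rewrite subr0.
      by move: Qi; rewrite if0.
    by have := ueQ i Qi; rewrite /= subr_ge0; apply: le_trans; rewrite /e ler0n.
  by have := ueQ f0 Qf0; rewrite /= (pointed _ Cu uQ) /e eqxx sub0r oppr_ge0 ler10.
have [w [wK we]] := cone_separation (cone_sub_convex Ccone (orthant_convex Q)) Kcl Ke.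
exists w; split; last by rewrite -dotf_e.
- move=> v Cv; apply: wK; exists v => //.
  rewrite (_ : v \- v = fun=> 0); first by case: (orthant_convex Q).
  by apply/funext => i /=; rewrite subrr.
- move=> i Qi; rewrite -dotf_e -oppr_le0.
  have -> : - dotf w (e i) = dotf w (fun j => - e i j).
    by rewrite /dotf -sumrN; apply: eq_bigr => j _; rewrite mulrN.
  apply: wK; exists (fun=> 0); first by case: Ccone.
  rewrite (_ : _ \- _ = e i); first exact: e_orthant.
  by apply/funext => j /=; rewrite sub0r opprK.
Qed.

End Cones.

Lemma Un_cv_near (u : nat -> R) (l : R) :
  (forall e : R, 0 < e -> \forall n \near \oo, `|u n - l| < e) -> Un_cv u l.
Proof.
move=> ul e /RltP e0; have [N _ uN] := ul e e0; exists N => n Nn.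
by apply/RltP; apply: uN; exact/ssrnat.leP.
Qed.

Section Tables.
Variables (D : finType) (k : nat).

Let nk := #|tup D k|.

Definition optable (g : op D k) : tup D nk := [ffun j => g (enum_val j)].
Definition tableop (y : tup D nk) : op D k := [ffun t => y (enum_rank t)].

Lemma optableK : cancel optable tableop.
Proof. by move=> g; apply/ffunP => t; rewrite !ffunE enum_rankK. Qed.

Lemma tableopK : cancel tableop optable.
Proof. by move=> y; apply/ffunP => j; rewrite !ffunE enum_valK. Qed.

Definition proj_op (i : 'I_k) : op D k := [ffun x : tup D k => x i].

Lemma is_projP (g : op D k) : is_proj g -> exists i, g = proj_op i.
Proof. by case/existsP => i /eqP ->; exists i. Qed.

Lemma proj_op_pol i m (ga : wrel_m D m) : is_pol (proj_op i) ga.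
Proof.
move=> xs xsF; suff -> : opapp (proj_op i) xs = xs i by [].
by apply/ffunP => j; rewrite !ffunE.
Qed.

Lemma opapp_proj_tables (g : op D k) : opapp g (optable \o proj_op) = optable g.
Proof.
by apply/ffunP => j; rewrite !ffunE; congr (g _); apply/ffunP => i; rewrite !ffunE.
Qed.

End Tables.

Lemma wadd_idE (D : finType) m (g1 g2 : wrel_m D m) x :
  wadd g1 g2 (fun i => i) (fun i => i) x = xadd (g1 x) (g2 x).
Proof. by rewrite /wadd !ffunK. Qed.

Lemma feas_wadd_id (D : finType) m (g1 g2 : wrel_m D m) x :
  feas (wadd g1 g2 (fun i => i) (fun i => i)) x = feas g1 x && feas g2 x.
Proof. by rewrite /feas wadd_idE; case: (g1 x); case: (g2 x). Qed.

Section PolCone.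
Variables (D : finType) (Gam : wrel D -> Prop) (k : nat) (d : D).
Hypothesis Gam_eq : Gam (phi_eq D).
Hypothesis Gam_empty : Gam (phi_empty D).
Hypothesis Gam_add : forall (r s t : nat) (g1 : wrel_m D s) (g2 : wrel_m D t)
  (sig : 'I_s -> 'I_r) (tau : 'I_t -> 'I_r),
  Gam (mkw g1) -> Gam (mkw g2) -> Gam (mkw (wadd g1 g2 sig tau)).
Hypothesis Gam_scale : forall (m : nat) (c : R) (g : wrel_m D m),
  0 <= c -> Gam (mkw g) -> Gam (mkw (wscale c g)).
Hypothesis Gam_const : forall (m : nat) (c : R) (g : wrel_m D m),
  Gam (mkw g) -> Gam (mkw (wconst c g)).
Hypothesis Gam_opt : forall (m : nat) (g : wrel_m D m), Gam (mkw g) -> Gam (mkw (wopt g)).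
Hypothesis Gam_closed : top_closed Gam.

Let nk := #|tup D k|.

Definition kpol (g : op D k) : Prop := Pol Gam (existT _ k g).

Lemma table_minor m (ga : wrel_m D m) (xs : 'I_k -> tup D m) : Gam (mkw ga) ->
  exists2 ga' : wrel_m D nk, Gam (mkw ga') & forall g, ga' (optable g) = ga (opapp g xs).
Proof.
(* A clone need not allow renaming variables on its own, but [wadd] renames them inside
   a sum; adding the copy [0 * ga], which has the same feasible set, changes no value. *)
move=> Gga; pose sig (j : 'I_m) : 'I_nk := enum_rank [ffun i => xs i j].
exists (wadd ga (wscale 0 ga) sig sig); first by apply: Gam_add => //; exact: Gam_scale.
move=> g; rewrite /wadd /wscale.
have -> : [ffun j => optable g (sig j)] = opapp g xs.
  by apply/ffunP => j; rewrite !ffunE enum_rankK.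
by case: (ga (opapp g xs)) => //= r; rewrite mul0r addr0.
Qed.

Lemma tables_feasible_rel :
  exists2 rho : wrel_m D nk, Gam (mkw rho) & forall g, feas rho (optable g).
Proof.
pose xs (i : 'I_k) : tup D 2 := [ffun=> d].
have [rho Grho rhoE] := table_minor xs Gam_eq.
exists rho => // g; rewrite /feas rhoE /=.
have gxs j : opapp g xs j = g [ffun=> d].
  by rewrite ffunE; congr (g _); apply/ffunP => i; rewrite !ffunE.
by rewrite !gxs eqxx.
Qed.

Lemma nonpol_infeasible_rel g : ~ kpol g -> exists2 rho : wrel_m D nk, Gam (mkw rho) &
  (forall g', kpol g' -> feas rho (optable g')) /\ ~~ feas rho (optable g).
Proof.
rewrite /kpol /Pol /is_pol => /existsNP[[m ga] /not_implyP[Gga]].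
move=> /existsNP[xs /not_implyP[xsF /negP nF]].
have [rho Grho rhoE] := table_minor xs Gga.
exists rho => //; split; last by rewrite /feas rhoE.
by move=> g' pg'; rewrite /feas rhoE; exact: (pg' (mkw ga) Gga).
Qed.

Lemma pol_indicator : exists2 rho : wrel_m D nk, Gam (mkw rho) &
  forall g, (kpol g -> rho (optable g) = Some 0) /\ (~ kpol g -> rho (optable g) = None).
Proof.
have feas_on (s : seq (op D k)) : exists2 rho : wrel_m D nk, Gam (mkw rho) &
    (forall g, kpol g -> feas rho (optable g)) /\
    (forall g, g \in s -> ~ kpol g -> ~~ feas rho (optable g)).
  elim: s => [|g s [rho Grho [rhoP rhoN]]].
    by have [rho Grho rhoF] := tables_feasible_rel; exists rho.
  have [pg|npg] := pselect (kpol g).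
    by exists rho => //; split => // g'; rewrite in_cons => /orP[/eqP -> //|]; exact: rhoN.
  have [rho' Grho' [rho'P rho'g]] := nonpol_infeasible_rel npg.
  exists (wadd rho rho' (fun i => i) (fun i => i)); first exact: Gam_add.
  split => [g' pg'|g' /[!in_cons] /orP[/eqP -> _|g's npg']];
    rewrite feas_wadd_id ?negb_and.
  - by rewrite rhoP ?rho'P.
  - by rewrite rho'g orbT.
  - by rewrite rhoN.
have [rho Grho [rhoP rhoN]] := feas_on (enum (op D k)).
exists (wscale 0 rho); first exact: Gam_scale.
move=> g; rewrite /wscale; split => [/rhoP|/(rhoN _ (mem_enum _ g))]; rewrite /feas.
  by case: (rho (optable g)) => //= r _; rewrite mul0r.
by case: (rho (optable g)).
Qed.

(* Vectors indexed by Pol^(k) are modelled as functions on all k-ary operations that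
   vanish off Pol^(k). *)
Definition pol_cone (v : op D k -> R) : Prop :=
  exists2 ga : wrel_m D nk, Gam (mkw ga) &
    forall g, (kpol g -> ga (optable g) = Some (v g)) /\
              (~ kpol g -> ga (optable g) = None /\ v g = 0).

Lemma pol_cone_convex : convex_cone pol_cone.
Proof.
have [rho Grho rhoE] := pol_indicator.
split.
- exists rho => // g; split => [/(rhoE g).1 //|/(rhoE g).2 //].
- move=> u v [gu Ggu guE] [gv Ggv gvE].
  exists (wadd gu gv (fun i => i) (fun i => i)); first exact: Gam_add.
  move=> g; rewrite wadd_idE; split => [pg|npg].
    by rewrite ((guE g).1 pg) ((gvE g).1 pg).
  by rewrite ((guE g).2 npg).1 /= ((guE g).2 npg).2 ((gvE g).2 npg).2 addr0.
- move=> c u c0 [gu Ggu guE]; exists (wscale c gu); first exact: Gam_scale.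
  move=> g; rewrite /wscale; split => [pg|npg]; first by rewrite ((guE g).1 pg).
  by rewrite ((guE g).2 npg).1 ((guE g).2 npg).2 mulr0.
Qed.

Lemma pol_cone_indicator c : pol_cone (fun g => if `[< kpol g >] then c else 0).
Proof.
have [rho Grho rhoE] := pol_indicator.
exists (wconst c rho); first exact: Gam_const.
move=> g; rewrite /wconst; split => [pg|npg].
  by rewrite (rhoE g).1 //= (asboolT pg) add0r.
by rewrite (rhoE g).2 // (asboolF npg).
Qed.

Lemma pol_cone_rel m (ga : wrel_m D m) (xs : 'I_k -> tup D m) :
  Gam (mkw ga) -> (forall i, feas ga (xs i)) ->
  pol_cone (fun g => if `[< kpol g >] then odflt 0 (ga (opapp g xs)) else 0).
Proof.
move=> Gga xsF.
have [ga' Gga' ga'E] := table_minor xs Gga.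
have [rho Grho rhoE] := pol_indicator.
exists (wadd ga' rho (fun i => i) (fun i => i)); first exact: Gam_add.
move=> g; rewrite wadd_idE ga'E; split => [pg|npg].
  rewrite (rhoE g).1 // (asboolT pg).
  have := pg (mkw ga) Gga xs xsF; rewrite /feas /=.
  by case: (ga (opapp g xs)) => //= r _; rewrite addr0.
by rewrite (rhoE g).2 // (asboolF npg); case: (ga (opapp g xs)).
Qed.

Lemma pol_cone_seq_closed : seq_closed pol_cone.
Proof.
move=> x L Cx xL.
have Cx' n : exists ga : wrel_m D nk, Gam (mkw ga) /\
    forall g, (kpol g -> ga (optable g) = Some (x n g)) /\
              (~ kpol g -> ga (optable g) = None /\ x n g = 0).
  by have [ga Gga gaE] := Cx n; exists ga.
have [gs gsE] := choice Cx'.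
pose ga (y : tup D nk) : xR := if `[< kpol (tableop y) >] then Some (L (tableop y)) else None.
exists ga; last first.
  move=> g; rewrite /ga optableK; split => [pg|npg]; first by rewrite asboolT.
  rewrite asboolF //; split => //.
  have x0 : (fun n => x n g) = fun=> 0.
    by apply/funext => n; exact: (((gsE n).2 g).2 npg).2.
  have := xL g; rewrite x0 => x0L.
  by rewrite -(cvg_lim _ x0L) // lim_cst.
apply: (@Gam_closed nk gs) => [n|n y|y]; first exact: (gsE n).1.
  rewrite -(tableopK y) /feas /ga optableK.
  have [pg|npg] := pselect (kpol (tableop y)).
    by rewrite asboolT // ((gsE n).2 _).1.
  by rewrite asboolF // (((gsE n).2 _).2 npg).1.
rewrite -(tableopK y) /feas /ga optableK.
have [pg _|npg] := pselect (kpol (tableop y)); last by rewrite asboolF.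
rewrite asboolT //=; apply: Un_cv_near => e e0; near=> n.
rewrite (((gsE n).2 _).1 pg) /=; near: n.
exact: (cvgrPdistC_lt _ _).1 (xL _) e e0.
Unshelve. all: by end_near. Qed.

Lemma pol_arity_gt0 f : kpol f -> (0 < k)%nat.
Proof.
move=> pf; rewrite lt0n; apply/negP => /eqP k0.
suff : feas (projT2 (phi_empty D)) (opapp f (fun _ => [ffun=> d])) by [].
by apply: (pf _ Gam_empty) => -[i /=]; rewrite k0.
Qed.

Lemma proj_op_kpol i : kpol (proj_op D i).
Proof. by move=> w _; exact: proj_op_pol. Qed.

Definition nonproj_kpol : set (op D k) := [set g | kpol g /\ ~ is_proj g].

Lemma pol_cone_pointed (i0 : 'I_k) v : pol_cone v -> orthant nonproj_kpol v ->
  forall g, v g = 0.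
Proof.
(* The tables of the projections attain the minimum 0 of [ga], so they are feasible
   for [wopt ga], hence so is their image [optable g] under a polymorphism [g]. *)
move=> [ga Gga gaE] [vQ vQ'].
have v_proj i : v (proj_op D i) = 0.
  by apply: vQ' => -[_]; apply; apply/existsP; exists i.
have v_ge0 g : kpol g -> 0 <= v g.
  move=> pg; have [/is_projP[i ->]|npg] := boolP (is_proj g); first by rewrite v_proj.
  by apply: vQ; split => //; exact/negP.
have ga_proj i : ga (optable (proj_op D i)) = Some 0.
  by rewrite (gaE _).1 ?v_proj //; exact: proj_op_kpol.
have ga_ge0 y : xle (Some 0) (ga y).
  rewrite -(tableopK y); have [pg|npg] := pselect (kpol (tableop y)).
    by rewrite (gaE _).1 //= v_ge0.
  by rewrite ((gaE _).2 npg).1.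
have opt_proj i : feas (wopt ga) (optable (proj_op D i)).
  have all0 : [forall y, xle (Some 0) (ga y)] by exact/forallP.
  by rewrite /feas /wopt /feas ga_proj all0.
move=> g; have [pg|npg] := pselect (kpol g); last exact: ((gaE g).2 npg).2.
have := pg (mkw (wopt ga)) (Gam_opt Gga) (fun i => optable (proj_op D i)) opt_proj.
rewrite opapp_proj_tables /feas /wopt /=; case: ifP => [/andP[_ /forallP gmin] _|//].
have := gmin (optable (proj_op D i0)); rewrite ga_proj (gaE g).1 //= => vle.
by apply/eqP; rewrite eq_le vle v_ge0.
Qed.

Section Weighting.
Variable w : op D k -> R.
Hypothesis w_cone : forall v, pol_cone v -> dotf w v <= 0.
Hypothesis w_nonproj : forall g, nonproj_kpol g -> 0 <= w g.

Definition weighting_of : weightfun D k := fun g => if `[< kpol g >] then w g else 0.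

Lemma weighting_of_is_weighting : is_weighting weighting_of.
Proof.
have dot_ind c : dotf w (fun g => if `[< kpol g >] then c else 0) =
    c * \sum_g weighting_of g.
  by rewrite mulr_sumr; apply: eq_bigr => g _; rewrite /weighting_of; case: ifP => _; ring.
split.
  have := w_cone (pol_cone_indicator 1); have := w_cone (pol_cone_indicator (-1)).
  by rewrite !dot_ind; lra.
move=> g; rewrite /weighting_of; have [pg|npg] := pselect (kpol g); last by rewrite asboolF ?ltxx.
rewrite asboolT // => wg0; have [//|npg'] := boolP (is_proj g).
by have := w_nonproj (conj pg (negP npg')); rewrite leNgt wg0.
Qed.

Lemma weighting_of_wpol m (ga : wrel_m D m) : Gam (mkw ga) -> is_wpol weighting_of ga.
Proof.
move=> Gga; split.
  move=> g /orP[/is_projP[i ->]|]; first exact: proj_op_pol.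
  rewrite /weighting_of; have [pg _|npg] := pselect (kpol g); last by rewrite asboolF ?ltxx.
  exact: pg (mkw ga) Gga.
move=> xs xsF; apply: le_trans (w_cone (pol_cone_rel Gga xsF)).
rewrite big_mkcond le_eqVlt; apply/orP; left; apply/eqP/eq_bigr => g _.
rewrite /weighting_of /in_supp.
have [pg|npg] := pselect (kpol g); last by rewrite !asboolF // mul0r mulr0; case: ifP.
rewrite !asboolT //; case: ifP => // /norP[npg' w_npos].
suff -> : w g = 0 by rewrite mul0r.
by apply/eqP; rewrite eq_le leNgt w_npos w_nonproj //; split => //; exact/negP.
Qed.

End Weighting.

Lemma wpol_of_nonproj_pol f : kpol f -> ~~ is_proj f ->
  exists om : weightfun D k, wPol Gam (existT _ k om) /\ in_supp om f.
Proof.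
move=> pf npf; pose i0 : 'I_k := Ordinal (pol_arity_gt0 pf).
have [w [w_cone w_nonproj wf]] := pointed_cone_separation pol_cone_convex
  pol_cone_seq_closed (@pol_cone_pointed i0) (conj pf (negP npf) : nonproj_kpol f).
exists (weighting_of w); split.
  split; first exact: weighting_of_is_weighting.
  by move=> [m ga] Gga; exact: weighting_of_wpol.
by rewrite /in_supp /weighting_of asboolT // wf orbT.
Qed.

End PolCone.

Local Close Scope classical_set_scope.
Local Close Scope ring_scope.

Theorem corollary1 (D : finType) (hD : 1 < #|D|) (Gam : wrel D -> Prop) :
  weighted_relational_clone Gam ->
  forall kf : anyop D, supp_set (wPol Gam) kf <-> Pol Gam kf.
Proof.
move=> [Geq Gemp Gadd _ [Gsc Gcst Gopt Gcl]] [k f]; split.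
  case=> /= [/is_projP[i ->]|[om [[_ om_wpol] om_f]]] w Gw /=.
    exact: proj_op_pol.
  exact: (om_wpol w Gw).1 f om_f.
move=> pf; have [pj|npj] := boolP (is_proj f); [by left | right => /=].
have /card_gt0P[d _] : 0 < #|D| by apply: ltn_trans hD.
by have := wpol_of_nonproj_pol d Geq Gemp Gadd Gsc Gcst Gopt Gcl pf npj.
Qed.
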